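(* Let $f:\mathbb{R}^d\to\mathbb{R}$ be convex and differentiable with $L$-Lipschitz gradient, with bounded level sets and a minimizer $x^*$. For $x\in\mathbb{R}^d$ let $\phi_x(\lambda)=f(x-\lambda\nabla f(x))$. Let $x_0\in\mathbb{R}^d$ and $x_{k+1}=x_k-\lambda_k\nabla f(x_k)$ with $\lambda_k=\max\{\lambda>0:\ \phi_{x_k}(2\lambda)\le\phi_{x_k}(\lambda)+\tfrac{\lambda}{2}\phi_{x_k}'(0)\}$ (assumed to be attained). Then $\lambda_k\ge 1/(3L)$ for all $k$, and there is a constant $D$ depending only on $x_0$, $x^*$, $L$ such that $f(x_k)-f(x^* )\le D/k$ for all $k\ge1$. (This is the case $h\equiv0$ of the non-accelerated composite scheme, for which $G^{f}_{\lambda h}=\nabla f$.)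
   Context: $\mathbb{R}^d$ carries the standard inner product and Euclidean norm $\|\cdot\|$; $\phi_x'(0)=-\|\nabla f(x)\|^2$ denotes the derivative of $\phi_x$ at $0$. *)

From HB Require Import structures.
From mathcomp Require Import all_boot all_order all_algebra.
From mathcomp Require Import all_classical all_reals all_analysis.
Set Implicit Arguments. Unset Strict Implicit. Unset Printing Implicit Defensive.
Import Order.TTheory GRing.Theory Num.Theory.
Import numFieldNormedType.Exports.
Local Open Scope ring_scope.

(* Standard (Euclidean) inner product and norm on R^d.  (The library's
   norm on matrices is the sup-norm, so we define the Euclidean one.) *)
Definition dotv (R : realType) (d : nat) (u v : 'rV[R]_d) : R :=
  \sum_(i < d) u 0 i * v 0 i.

Definition enorm (R : realType) (d : nat) (u : 'rV[R]_d) : R :=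
  Num.sqrt (dotv u u).

Definition gradient (R : realType) (d : nat) (f : 'rV[R]_d -> R^o)
  (x : 'rV[R]_d) : 'rV[R]_d :=
  \row_(i < d) ('d f x (delta_mx 0 i : 'rV[R]_d)).

Definition convex_fun (R : realType) (d : nat) (f : 'rV[R]_d -> R) : Prop :=
  forall (x y : 'rV[R]_d) (t : R), 0 <= t <= 1 ->
    f (t *: x + (1 - t) *: y) <= t * f x + (1 - t) * f y.

Definition bounded_level_sets (R : realType) (d : nat) (f : 'rV[R]_d -> R) : Prop :=
  forall c : R, exists M : R, forall x, f x <= c -> enorm x <= M.

Definition phi (R : realType) (d : nat) (f : 'rV[R]_d -> R^o)
  (x : 'rV[R]_d) (lam : R) : R :=
  f (x - lam *: gradient f x).

(* phi_x'(0) = - ||grad f(x)||^2 (as fixed in the paper's context) *)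
Definition dphi0 (R : realType) (d : nat) (f : 'rV[R]_d -> R^o)
  (x : 'rV[R]_d) : R :=
  - (enorm (gradient f x)) ^+ 2.

Definition ls_cond (R : realType) (d : nat) (f : 'rV[R]_d -> R^o)
  (x : 'rV[R]_d) (lam : R) : Prop :=
  phi f x (2 * lam) <= phi f x lam + lam / 2 * dphi0 f x.

(* Along the ray lam |-> x - lam grad f(x) the Lipschitz bound on grad f gives
   phi_x'(s) <= -|grad f(x)|^2 (1 - L s); integrating over [lam, 2 lam] shows that the
   acceptance test holds for every lam <= 1/(3L), so the maximal accepted step is at
   least 1/(3L).  Convexity at the midpoint of [x, x - 2 lam grad f(x)] turns the test
   into the descent inequality f(x_{k+1}) <= f(x_k) - lam_k |grad f(x_k)|^2 / 2, and with
   the gradient inequality this yields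
   2 lam_k (f(x_{k+1}) - f(xstar)) <= |x_k - xstar|^2 - |x_{k+1} - xstar|^2.
   Telescoping, using that f(x_k) decreases, gives f(x_k) - f(xstar) <= 3L|x_0 - xstar|^2/(2k). *)

From HB Require Import structures.
From mathcomp Require Import all_boot all_order all_algebra.
From mathcomp Require Import all_classical all_reals all_analysis.
From mathcomp Require Import ring lra.
Set Implicit Arguments. Unset Strict Implicit. Unset Printing Implicit Defensive.
Import Order.TTheory GRing.Theory Num.Theory.
Import numFieldNormedType.Exports.
Local Open Scope classical_set_scope.
Local Open Scope ring_scope.

Section EuclideanInnerProduct.
Variables (R : realType) (d : nat).
Implicit Types (u v w : 'rV[R]_d).

Lemma dotvC u v : dotv u v = dotv v u.
Proof. by apply: eq_bigr => i _; rewrite mulrC. Qed.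

Lemma dotvDr u v w : dotv u (v + w) = dotv u v + dotv u w.
Proof. by rewrite /dotv -big_split; apply: eq_bigr => i _; rewrite mxE mulrDr. Qed.

Lemma dotvZr u a v : dotv u (a *: v) = a * dotv u v.
Proof. by rewrite /dotv mulr_sumr; apply: eq_bigr => i _; rewrite mxE mulrCA. Qed.

Lemma dotvNr u v : dotv u (- v) = - dotv u v.
Proof. by rewrite -scaleN1r dotvZr mulN1r. Qed.

Lemma dotvBr u v w : dotv u (v - w) = dotv u v - dotv u w.
Proof. by rewrite dotvDr dotvNr. Qed.

Lemma dotvBl u v w : dotv (v - w) u = dotv v u - dotv w u.
Proof. by rewrite dotvC dotvBr !(dotvC u). Qed.

Lemma dotvZl u a v : dotv (a *: v) u = a * dotv v u.
Proof. by rewrite dotvC dotvZr dotvC. Qed.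

Lemma dotv_ge0 u : 0 <= dotv u u.
Proof. by apply: sumr_ge0 => i _; rewrite -expr2 sqr_ge0. Qed.

Lemma enorm_ge0 u : 0 <= enorm u.
Proof. exact: sqrtr_ge0. Qed.

Lemma enorm_sq u : enorm u ^+ 2 = dotv u u.
Proof. by rewrite sqr_sqrtr // dotv_ge0. Qed.

Lemma enormZ a u : enorm (a *: u) = `|a| * enorm u.
Proof.
rewrite /enorm dotvZl dotvZr mulrA -expr2 sqrtrM ?sqr_ge0 //.
by rewrite sqrtr_sqr.
Qed.

Lemma dotv_self_eq0 u : dotv u u = 0 -> forall i, u 0 i = 0.
Proof.
move=> u0 i; have sq_ge0 (j : 'I_d) : true -> 0 <= u 0 j * u 0 j.
  by rewrite -expr2 sqr_ge0.
by have /eqP := psumr_eq0P sq_ge0 u0 (i := i) isT; rewrite mulf_eq0 orbb => /eqP.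
Qed.

Lemma dotv_sqr_le u v : dotv u v ^+ 2 <= dotv u u * dotv v v.
Proof.
set A := dotv u u; set B := dotv u v; set C := dotv v v.
have [C0|C_neq0] := eqVneq C 0.
  have -> : B = 0 by rewrite /B /dotv big1 // => i _; rewrite (dotv_self_eq0 C0) mulr0.
  by rewrite expr0n /= mulr_ge0 ?dotv_ge0.
have C_gt0 : 0 < C by rewrite lt_def C_neq0 dotv_ge0.
have := dotv_ge0 (C *: u - B *: v).
rewrite dotvBl !dotvBr !dotvZl !dotvZr -/A -/B -/C (dotvC v u) -/B.
move=> expansion; suff : 0 <= C * (A * C - B ^+ 2) by rewrite pmulr_rge0 // subr_ge0.
by apply: (le_trans expansion); rewrite le_eqVlt; apply/orP; left; apply/eqP; ring.
Qed.

Lemma cauchy_schwarz u v : dotv u v <= enorm u * enorm v.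
Proof.
apply: le_trans (ler_norm _) _.
rewrite /enorm -sqrtrM ?dotv_ge0 // -sqrtr_sqr ler_sqrt ?mulr_ge0 ?dotv_ge0 //.
exact: dotv_sqr_le.
Qed.

Lemma diff_gradient (f : 'rV[R]_d -> R^o) y v :
  'd f y v = dotv (gradient f y) v.
Proof.
rewrite [in LHS](row_sum_delta v) linear_sum /dotv.
by apply: eq_bigr => i _; rewrite linearZ /= mxE mulrC.
Qed.
Lemma enorm_sqB u w t :
  enorm (u - t *: w) ^+ 2 = enorm u ^+ 2 - 2 * t * dotv w u + t ^+ 2 * enorm w ^+ 2.
Proof.
rewrite !enorm_sq dotvBl !dotvBr !dotvZl !dotvZr (dotvC u w).
by rewrite expr2; ring.
Qed.

End EuclideanInnerProduct.

Section RealDerivative.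
Variable R : realType.

Lemma derive1_le_slope (psi : R -> R) (a B : R) :
  derivable psi a 1 ->
  (\forall h \near 0^'+, (psi (a + h) - psi a) / h <= B) ->
  'D_1 psi a <= B.
Proof.
move=> dpsi slopeB; rewrite ['D_1 psi a]cvg_at_rightE //; apply: limr_le.
  rewrite -(cvg_at_rightE (fun h : R => h^-1 *: ((psi \o shift a) _ - psi a))) //.
  apply: cvg_trans dpsi; apply: cvg_app.
  move=> A [e e0 Ae]; exists e => // y ye y0; apply: Ae => //.
  exact/lt0r_neq0.
apply: filterS slopeB => h /=.
by rewrite [_%:A]mulr1 (addrC h) mulrC.
Qed.

Lemma increment_le_of_derive_le_affine (psi dpsi : R -> R) (a b c0 c1 : R) :
  a < b -> (forall s : R, is_derive s (1 : R) psi (dpsi s)) ->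
  (forall s, a < s < b -> dpsi s <= c0 + c1 * s) ->
  psi b - psi a <= c0 * (b - a) + c1 / 2 * (b ^+ 2 - a ^+ 2).
Proof.
move=> ab dpsiE dpsi_le.
pose q s := psi s - (c0 * s + c1 / 2 * s ^+ 2).
have dq (s : R) : is_derive s (1 : R) q (dpsi s - (c0 + c1 * s)).
  apply: is_deriveB.
  have -> : (fun s => c0 * s + c1 / 2 * s ^+ 2) = c0 *: id + (c1 / 2) *: (@id R) ^+ 2.
    by apply/funext => t /=; rewrite expr2.
  apply: (is_derive_eq (is_deriveD (is_deriveZ c0 (is_derive_id s 1))
    (is_deriveZ (c1 / 2) (is_deriveX 2 (is_derive_id s 1))))).
  by rewrite expr1 !scaler1 /GRing.scale /=; field.
have cq : {within `[a, b], continuous q}.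
  apply: derivable_within_continuous => t _.
  exact: (@ex_derive _ _ _ _ _ _ _ (dq t)).
have [c /[!in_itv] /= /andP[ac cb] qE] := MVT ab (fun s _ => dq s) cq.
have : q b - q a <= 0.
  by rewrite qE mulr_le0_ge0 ?subr_le0 ?dpsi_le ?ac ?cb // subr_ge0 ltW.
rewrite /q; lra.
Qed.
End RealDerivative.

Lemma telescoping_rate (R : realFieldType) (delta r : nat -> R) (c : R) :
  0 <= c -> (forall k, delta k.+1 <= delta k) ->
  (forall k, c * delta k.+1 <= r k - r k.+1) ->
  forall k, c * (k%:R * delta k) <= r 0%N - r k.
Proof.
move=> c0 decr step; elim=> [|k IH]; first by rewrite mul0r mulr0 subrr.
have ck : c * (k%:R * delta k.+1) <= c * (k%:R * delta k).
  by rewrite ler_wpM2l // ler_wpM2l.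
have := step k; rewrite -natr1; lra.
Qed.

Section GradientDescent.
Variables (R : realType) (d : nat) (f : 'rV[R]_d -> R^o).
Hypothesis f_diff : forall z, differentiable f z.

Lemma is_derive_along_line (p v : 'rV[R]_d) (t : R) :
  is_derive t (1 : R) (fun s : R => f (p + s *: v) : R)
    (dotv (gradient f (p + t *: v)) v).
Proof.
have line_diff : is_diff t (fun s : R => p + s *: v) (fun s : R => 0 + s *: v).
  by have -> : (fun s : R => p + s *: v) = cst p + ( *:%R ^~ v) by []; exact: is_diffD.
have -> : (fun s : R => f (p + s *: v)) = f \o (fun s : R => p + s *: v) by [].
have comp_diff : differentiable (f \o (fun s : R => p + s *: v)) t.
  exact: differentiable_comp.
apply: DeriveDef; first exact/diff_derivable.
by rewrite deriveE // diff_comp //= diff_val /= add0r scale1r diff_gradient.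
Qed.

Lemma convex_gradient_ineq (p q : 'rV[R]_d) :
  convex_fun f -> f p + dotv (gradient f p) (q - p) <= f q.
Proof.
move=> f_cvx; set w := q - p.
have := is_derive_along_line p w 0; rewrite scale0r addr0 => -[psi_derivable <-].
suff : 'D_1 (fun s : R => f (p + s *: w) : R) 0 <= f q - f p by lra.
apply: derive1_le_slope => //; near=> h.
have h0 : 0 < h by near: h; exact: nbhs_right_gt.
have h1 : h <= 1 by near: h; exact: nbhs_right_le.
rewrite add0r scale0r addr0 ler_pdivrMr //.
have -> : p + h *: w = h *: q + (1 - h) *: p.
  by apply/rowP => i; rewrite !mxE; ring.
have := f_cvx q p h; rewrite (ltW h0) h1 => /(_ isT); lra.
Unshelve. all: by end_near.
Qed.

Lemma ls_cond_descent (x : 'rV[R]_d) (l : R) :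
  convex_fun f -> ls_cond f x l ->
  f (x - l *: gradient f x) <= f x - l / 2 * enorm (gradient f x) ^+ 2.
Proof.
rewrite /ls_cond /phi /dphi0 => f_cvx; set g := gradient f x.
have midpoint : 1 / 2 *: x + (1 - 1 / 2) *: (x - (2 * l) *: g) = x - l *: g.
  by apply/rowP => i; rewrite !mxE; field.
have half01 : 0 <= (1 / 2 : R) <= 1 by apply/andP; split; lra.
have := @f_cvx x (x - (2 * l) *: g) (1 / 2) half01; rewrite midpoint; lra.
Qed.

Lemma ls_step_distance (x z : 'rV[R]_d) (l : R) :
  convex_fun f -> 0 <= l -> ls_cond f x l ->
  2 * l * (f (x - l *: gradient f x) - f z) <=
    enorm (x - z) ^+ 2 - enorm (x - l *: gradient f x - z) ^+ 2.
Proof.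
move=> f_cvx l0 ls; set g := gradient f x.
have grad_ineq : f x - f z <= dotv g (x - z).
  by have := convex_gradient_ineq x z f_cvx; rewrite -/g -opprB dotvNr; lra.
have descent := ls_cond_descent f_cvx ls.
have f_drop : f (x - l *: g) - f z <= dotv g (x - z) - l / 2 * enorm g ^+ 2 by lra.
rewrite addrAC enorm_sqB.
have -> : enorm (x - z) ^+ 2 - (enorm (x - z) ^+ 2 - 2 * l * dotv g (x - z)
    + l ^+ 2 * enorm g ^+ 2) = 2 * l * (dotv g (x - z) - l / 2 * enorm g ^+ 2).
  by field.
by rewrite ler_wpM2l ?mulr_ge0.
Qed.

Variable L : R.
Hypothesis gradient_lipschitz :
  forall y z, enorm (gradient f y - gradient f z) <= L * enorm (y - z).

Lemma dotv_gradientB_le (p q w : 'rV[R]_d) :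
  dotv (gradient f p - gradient f q) w <= L * enorm (p - q) * enorm w.
Proof.
apply: (le_trans (cauchy_schwarz _ _)).
by rewrite ler_wpM2r ?enorm_ge0.
Qed.

Lemma ls_cond_small_step (x : 'rV[R]_d) (l : R) :
  0 < l -> 3 * L * l <= 1 -> ls_cond f x l.
Proof.
move=> l0 lL; set g := gradient f x.
have slope_le s : l < s < 2 * l ->
    dotv (gradient f (x + s *: - g)) (- g) <= - enorm g ^+ 2 + L * enorm g ^+ 2 * s.
  move=> /andP[ls _]; have s0 : 0 < s by lra.
  have := dotv_gradientB_le x (x + s *: - g) g.
  have -> : x - (x + s *: - g) = s *: g by rewrite opprD addrA subrr add0r scalerN opprK.
  move: (gradient f (x + s *: - g)) => g'.
  rewrite dotvBl dotvNr enormZ gtr0_norm // (dotvC g') -/g.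
  have -> : L * (s * enorm g) * enorm g = L * enorm g ^+ 2 * s by ring.
  rewrite enorm_sq; lra.
have l2l : l < 2 * l by lra.
have := increment_le_of_derive_le_affine l2l (is_derive_along_line x (- g)) slope_le.
(* the slack 1 - 3 L l is what remains after integrating slope_le over [l, 2 l] *)
have G0 : 0 <= enorm g ^+ 2 * l * (1 - 3 * L * l).
  by rewrite mulr_ge0 ?subr_ge0 // mulr_ge0 ?sqr_ge0 // ltW.
rewrite /ls_cond /phi /dphi0 !scalerN -/g.
move: (enorm g ^+ 2) G0 => G G0; nra.
Qed.

End GradientDescent.

Theorem corollary2p4 (R : realType) (d : nat) :
  exists D : 'rV[R]_d -> 'rV[R]_d -> R -> R,
  forall (f : 'rV[R]_d -> R^o) (L : R) (x0 xstar : 'rV[R]_d)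
         (x : nat -> 'rV[R]_d) (lam : nat -> R),
    convex_fun f ->
    (forall z, differentiable f z) ->
    0 < L ->
    (forall y z, enorm (gradient f y - gradient f z) <= L * enorm (y - z)) ->
    bounded_level_sets f ->
    (forall z, f xstar <= f z) ->
    x 0%N = x0 ->
    (forall k, x k.+1 = x k - lam k *: gradient f (x k)) ->
    (forall k, 0 < lam k /\ ls_cond f (x k) (lam k) /\
       forall l, 0 < l -> ls_cond f (x k) l -> l <= lam k) ->
    (forall k, 1 / (3 * L) <= lam k) /\
    (forall k, (1 <= k)%N -> f (x k) - f xstar <= D x0 xstar L / k%:R).
Proof.
exists (fun x0 xstar L => 3 * L / 2 * enorm (x0 - xstar) ^+ 2).
move=> f L x0 xs x lam f_cvx f_diff L0 f_lip _ xs_min x0E xS lamP.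
have lam_ge k : 1 / (3 * L) <= lam k.
  have [_ [_ lam_max]] := lamP k.
  have L3 : 0 < 3 * L by rewrite mulr_gt0.
  apply: lam_max; first by rewrite divr_gt0.
  by apply: (ls_cond_small_step f_diff f_lip); rewrite ?divr_gt0 // mul1r mulfV ?gt_eqF.
split=> // k k1.
pose gap n := f (x n) - f xs.
pose r n := enorm (x n - xs) ^+ 2.
have decr n : gap n.+1 <= gap n.
  have [lam0 [ls _]] := lamP n.
  have := ls_cond_descent f_cvx ls; rewrite -xS /gap.
  have : 0 <= lam n / 2 * enorm (gradient f (x n)) ^+ 2.
    by rewrite mulr_ge0 ?sqr_ge0 ?divr_ge0 ?ltW.
  lra.
have step n : 2 / (3 * L) * gap n.+1 <= r n - r n.+1.
  have [lam0 [ls _]] := lamP n.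
  have := ls_step_distance f_diff xs f_cvx (ltW lam0) ls; rewrite -xS.
  apply: le_trans; rewrite ler_wpM2r ?subr_ge0 ?xs_min //.
  by have := lam_ge n; lra.
have c0 : 0 <= 2 / (3 * L) by rewrite divr_ge0 // ltW // mulr_gt0.
have := telescoping_rate c0 decr step k.
rewrite ler_pdivlMr ?ltr0n // -x0E -/(r 0%N) -/(gap k).
have -> : gap k * k%:R = 3 * L / 2 * (2 / (3 * L) * (k%:R * gap k)).
  by field; rewrite gt_eqF.
have rk0 : 0 <= r k := sqr_ge0 _.
by move=> rate; rewrite ler_wpM2l //; lra.
Qed.
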